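(* There is a function $\varepsilon(n)\to0$ such that the following holds. Let $h$ be the histogram of a distribution $p$, let $n$ be a number of samples, and for each integer $1\le j<\log^2 n$ let $m_j<\frac2n\log^2n$ be a probability value. For any faithful set $S$ of $n$ samples from $p$, assign probability $m_j$ to each domain element seen exactly $j$ times in $S$. Then the total error $\sum_{1\le j<\log^2n}\ \sum_{a\text{ seen exactly }j\text{ times}}|p(a)-m_j|$ is within $\varepsilon(n)$ of $\sum_{1\le j<\log^2n}dev_{j,n}(h,m_j)$.
   Context: $\log$ is natural; $poi(\lambda,j)=e^{-\lambda}\lambda^j/j!$; $h(x)$ is the number of domain elements of probability $x$. $dev_{j,n}(h,m)=\sum_{x:h(x)\neq0}|x-m|h(x)poi(nx,j)$. Faithful: for an integer $k\ge0$, bucket $k$ consists of histogram entries with probabilities in $(\frac{k}{n\log^2n},\frac{k+1}{n\log^2n}]$, $B_{poi}(j,k)=\sum_{x \text{ in bucket }k, h(x)\neq0}h(x)poi(nx,j)$, and $B_S(j,k)$ is the number of domain elements in bucket $k$ seen exactly $j$ times in $S$; a set $S$ of $n$ samples is faithful if (1) each domain element of probability $x$ appears $j$ times with $|nx-j|<\max\{\log^{1.5}n,\sqrt{nx\log^{1.5}n}\}$, and (2) for each $j<\log^2n$ and each $k$, $|B_{poi}(j,k)-B_S(j,k)|<n^{0.6}$. *)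

From Stdlib Require Import Reals Lra Lia List Arith Factorial ZArith.
Import ListNotations.
Open Scope R_scope.

Definition rsum {A : Type} (l : list A) (f : A -> R) : R :=
  fold_right Rplus 0 (map f l).

Definition domain (D : nat) : list nat := seq 0 D.

Definition is_distribution (D : nat) (p : nat -> R) : Prop :=
  (forall a, (a < D)%nat -> 0 <= p a) /\ rsum (domain D) p = 1.

Definition poi (lam : R) (j : nat) : R :=
  exp (- lam) * lam ^ j / INR (fact j).

Definition hist (D : nat) (p : nat -> R) (x : R) : nat :=
  length (filter (fun a => if Req_EM_T (p a) x then true else false) (domain D)).

(* the (distinct) probability values x with h(x) <> 0 *)
Definition hist_support (D : nat) (p : nat -> R) : list R :=
  nodup Req_EM_T (map p (domain D)).

Definition dev (D : nat) (p : nat -> R) (j n : nat) (m : R) : R :=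
  rsum (hist_support D p)
    (fun x => Rabs (x - m) * INR (hist D p x) * poi (INR n * x) j).

Definition in_bucket (n k : nat) (x : R) : Prop :=
  INR k / (INR n * (ln (INR n))^2) < x /\ x <= INR (S k) / (INR n * (ln (INR n))^2).

Definition in_bucketb (n k : nat) (x : R) : bool :=
  if Rlt_dec (INR k / (INR n * (ln (INR n))^2)) x then
    if Rle_dec x (INR (S k) / (INR n * (ln (INR n))^2)) then true else false
  else false.

Definition occ (S : list nat) (a : nat) : nat := count_occ Nat.eq_dec S a.

Definition B_poi (D : nat) (p : nat -> R) (n j k : nat) : R :=
  rsum (filter (in_bucketb n k) (hist_support D p))
    (fun x => INR (hist D p x) * poi (INR n * x) j).

Definition B_S (D : nat) (p : nat -> R) (S : list nat) (n j k : nat) : nat :=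
  length (filter (fun a => andb (in_bucketb n k (p a)) (Nat.eqb (occ S a) j)) (domain D)).

Definition faithful (D : nat) (p : nat -> R) (n : nat) (S : list nat) : Prop :=
  length S = n /\
  (forall a, (a < D)%nat ->
     Rabs (INR n * p a - INR (occ S a)) <
       Rmax (Rpower (ln (INR n)) 1.5)
            (sqrt (INR n * p a * Rpower (ln (INR n)) 1.5))) /\
  (forall j k : nat, INR j < (ln (INR n))^2 ->
     Rabs (B_poi D p n j k - INR (B_S D p S n j k)) < Rpower (INR n) 0.6).

Definition js (n : nat) : list nat :=
  filter (fun j => if Rlt_dec (INR j) ((ln (INR n))^2) then true else false)
    (seq 1 (Z.to_nat (up ((ln (INR n))^2)))).

Definition total_error (D : nat) (p : nat -> R) (S : list nat) (n : nat)
    (m : nat -> R) : R :=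
  rsum (js n) (fun j =>
    rsum (filter (fun a => Nat.eqb (occ S a) j) (domain D))
      (fun a => Rabs (p a - m j))).

Definition total_dev (D : nat) (p : nat -> R) (n : nat) (m : nat -> R) : R :=
  rsum (js n) (fun j => dev D p j n (m j)).

From Stdlib Require Import Reals Lra Lia List ZArith.
Import ListNotations.
Open Scope R_scope.

(* Fix a count [1 <= j < log^2 n] and cut [(0, K / (n log^2 n)]] into
   [K ~ 6 log^4 n] buckets of width [1 / (n log^2 n)].  By faithfulness (1)
   every element seen [j] times lies in these buckets, while an element beyond
   them has Poisson weight [poi(n p(a), j) <= n^{-2}].  Rounding every
   probability up to the top of its bucket changes the error by one bucket
   width per element seen [j] times and [dev_{j,n}] by one bucket width per
   unit of Poisson mass; after rounding, both are sums over buckets weighted by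
   [B_S(j,k)] and [B_poi(j,k)] respectively, which differ by less than [n^0.6]
   by faithfulness (2).  Summing over [j], the gap is at most
   [2 / log^2 n + 128 log^8 n / n^0.4]. *)

Section ListSums.

Context {A : Type}.

Lemma rsum_nil (f : A -> R) : rsum [] f = 0.
Proof. reflexivity. Qed.

Lemma rsum_cons (x : A) l f : rsum (x :: l) f = f x + rsum l f.
Proof. reflexivity. Qed.

Lemma rsum_app (l1 l2 : list A) f : rsum (l1 ++ l2) f = rsum l1 f + rsum l2 f.
Proof.
  induction l1 as [|x l1 IH]; simpl app; [rewrite rsum_nil; ring|].
  rewrite !rsum_cons, IH; ring.
Qed.

Lemma rsum_ext (l : list A) f g :
  (forall x, In x l -> f x = g x) -> rsum l f = rsum l g.
Proof.
  induction l as [|x l IH]; intros H; [reflexivity|].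
  rewrite !rsum_cons, H, IH; simpl; auto.
  intros; apply H; simpl; auto.
Qed.

Lemma rsum_plus (l : list A) f g :
  rsum l (fun x => f x + g x) = rsum l f + rsum l g.
Proof. induction l as [|x l IH]; [rewrite !rsum_nil; ring|]. rewrite !rsum_cons, IH; ring. Qed.

Lemma rsum_minus (l : list A) f g :
  rsum l (fun x => f x - g x) = rsum l f - rsum l g.
Proof. induction l as [|x l IH]; [rewrite !rsum_nil; ring|]. rewrite !rsum_cons, IH; ring. Qed.

Lemma rsum_scal (l : list A) c f : rsum l (fun x => c * f x) = c * rsum l f.
Proof. induction l as [|x l IH]; [rewrite !rsum_nil; ring|]. rewrite !rsum_cons, IH; ring. Qed.

Lemma rsum_scal_r (l : list A) c f : rsum l (fun x => f x * c) = rsum l f * c.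
Proof. rewrite Rmult_comm, <- rsum_scal. apply rsum_ext; intros; ring. Qed.

Lemma rsum_const (l : list A) c : rsum l (fun _ => c) = INR (length l) * c.
Proof.
  induction l as [|x l IH]; [rewrite rsum_nil; simpl; ring|].
  rewrite rsum_cons, IH; simpl length; rewrite S_INR; ring.
Qed.

Lemma rsum_zero (l : list A) f : (forall x, In x l -> f x = 0) -> rsum l f = 0.
Proof. intros H. rewrite (rsum_ext _ _ (fun _ => 0)), rsum_const by auto; ring. Qed.

Lemma rsum_le (l : list A) f g :
  (forall x, In x l -> f x <= g x) -> rsum l f <= rsum l g.
Proof.
  induction l as [|x l IH]; intros H; [rewrite !rsum_nil; lra|].
  rewrite !rsum_cons. apply Rplus_le_compat; [apply H; simpl; auto|].
  apply IH; intros; apply H; simpl; auto.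
Qed.

Lemma rsum_nonneg (l : list A) f : (forall x, In x l -> 0 <= f x) -> 0 <= rsum l f.
Proof. intros H. rewrite <- (rsum_zero l (fun _ => 0)) by auto. now apply rsum_le. Qed.

Lemma rsum_ge_term (l : list A) f x :
  (forall y, In y l -> 0 <= f y) -> In x l -> f x <= rsum l f.
Proof.
  induction l as [|y l IH]; intros H Hx; [destruct Hx|]. rewrite rsum_cons.
  assert (Hl : forall z, In z l -> 0 <= f z) by (intros; apply H; simpl; auto).
  destruct Hx as [<-|Hx].
  - pose proof (rsum_nonneg l f Hl). lra.
  - pose proof (H y (or_introl eq_refl)). pose proof (IH Hl Hx). lra.
Qed.

Lemma rsum_abs (l : list A) f : Rabs (rsum l f) <= rsum l (fun x => Rabs (f x)).
Proof.
  induction l as [|x l IH]; [rewrite !rsum_nil, Rabs_R0; lra|]. rewrite !rsum_cons.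
  eapply Rle_trans; [apply Rabs_triang | lra].
Qed.

Lemma rsum_filter (P : A -> bool) l f :
  rsum (filter P l) f = rsum l (fun x => if P x then f x else 0).
Proof.
  induction l as [|x l IH]; [reflexivity|]. simpl filter. rewrite rsum_cons.
  destruct (P x); rewrite ?rsum_cons, IH; ring.
Qed.

Lemma rsum_filter_le (P : A -> bool) l f :
  (forall x, In x l -> 0 <= f x) -> rsum (filter P l) f <= rsum l f.
Proof.
  intros H; rewrite rsum_filter; apply rsum_le.
  intros x Hx; destruct (P x); [lra | auto].
Qed.

Lemma length_filter_rsum (P : A -> bool) l :
  INR (length (filter P l)) = rsum l (fun x => if P x then 1 else 0).
Proof. rewrite <- (Rmult_1_r (INR _)), <- rsum_const, rsum_filter. reflexivity. Qed.

Lemma rsum_map {B} (g : B -> A) l f : rsum (map g l) f = rsum l (fun x => f (g x)).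
Proof. induction l as [|x l IH]; [reflexivity|]. simpl map. rewrite !rsum_cons, IH; reflexivity. Qed.

End ListSums.

Lemma rsum_swap {A B} (l1 : list A) (l2 : list B) (f : A -> B -> R) :
  rsum l1 (fun a => rsum l2 (fun b => f a b)) = rsum l2 (fun b => rsum l1 (fun a => f a b)).
Proof.
  induction l1 as [|x l1 IH].
  - rewrite rsum_nil; symmetry; apply rsum_zero; reflexivity.
  - rewrite rsum_cons, IH, <- rsum_plus. reflexivity.
Qed.

Lemma rsum_seq0 f N : rsum (seq 0 (S N)) f = sum_f_R0 f N.
Proof.
  induction N as [|N IH]; [unfold rsum; simpl; ring|].
  rewrite seq_S, rsum_app, IH. unfold rsum; simpl; ring.
Qed.

Lemma rsum_eq_indicator_le1 (l : list nat) c :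
  NoDup l -> rsum l (fun j => if Nat.eqb c j then 1 else 0) <= 1.
Proof.
  induction l as [|a l IH]; intros H; [rewrite !rsum_nil; lra|]. inversion H as [|? ? Ha Hl]; subst.
  rewrite rsum_cons. destruct (Nat.eqb c a) eqn:E.
  - apply Nat.eqb_eq in E; subst. rewrite rsum_zero; [lra|].
    intros x Hx. destruct (Nat.eqb a x) eqn:E'; auto.
    apply Nat.eqb_eq in E'; subst; contradiction.
  - specialize (IH Hl); lra.
Qed.

(** * Histograms *)

Lemma rsum_nodup_indicator (U : list R) y g : NoDup U -> In y U ->
  rsum U (fun x => if Req_EM_T y x then g x else 0) = g y.
Proof.
  induction U as [|a U IH]; intros H1 H2; [destruct H2|]. rewrite rsum_cons.
  inversion H1 as [|? ? Ha HU]; subst. destruct (Req_EM_T y a) as [<-|Hya].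
  - rewrite rsum_zero; [ring|]. intros x Hx.
    destruct (Req_EM_T y x); [subst; contradiction | reflexivity].
  - rewrite IH; auto; [ring|]. destruct H2; [congruence | auto].
Qed.

Lemma rsum_hist_support D p (G : R -> R) :
  rsum (hist_support D p) (fun x => INR (hist D p x) * G x) =
  rsum (domain D) (fun a => G (p a)).
Proof.
  unfold hist_support, hist.
  rewrite (rsum_ext _ _
    (fun x => rsum (domain D) (fun a => if Req_EM_T (p a) x then G x else 0))).
  2:{ intros x _. rewrite length_filter_rsum, Rmult_comm, <- rsum_scal.
      apply rsum_ext. intros a _. destruct (Req_EM_T (p a) x); ring. }
  rewrite rsum_swap. apply rsum_ext. intros a Ha.
  apply rsum_nodup_indicator; [apply NoDup_nodup|].
  apply nodup_In, in_map; auto.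
Qed.

Lemma dev_domain D p j n m : dev D p j n m =
  rsum (domain D) (fun a => Rabs (p a - m) * poi (INR n * p a) j).
Proof.
  unfold dev. rewrite <- (rsum_hist_support D p (fun x => Rabs (x - m) * poi (INR n * x) j)).
  apply rsum_ext; intros; ring.
Qed.

Lemma B_poi_domain D p n j k : B_poi D p n j k =
  rsum (domain D) (fun a => if in_bucketb n k (p a) then poi (INR n * p a) j else 0).
Proof.
  unfold B_poi.
  rewrite rsum_filter, <- (rsum_hist_support D p
    (fun x => if in_bucketb n k x then poi (INR n * x) j else 0)).
  apply rsum_ext; intros x _. destruct (in_bucketb n k x); ring.
Qed.

Lemma B_S_domain D p S n j k : INR (B_S D p S n j k) =
  rsum (domain D) (fun a => if in_bucketb n k (p a)
                            then (if Nat.eqb (occ S a) j then 1 else 0) else 0).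
Proof.
  unfold B_S. rewrite length_filter_rsum. apply rsum_ext; intros a _.
  destruct (in_bucketb n k (p a)), (Nat.eqb (occ S a) j); reflexivity.
Qed.

(** * Poisson probabilities *)

Lemma exp_le_mono x y : x <= y -> exp x <= exp y.
Proof. intros [H|H]; [left; now apply exp_increasing | subst; lra]. Qed.

Lemma exp_series_partial_le x N :
  0 <= x -> sum_f_R0 (fun i => / INR (fact i) * x ^ i) N <= exp x.
Proof.
  intros Hx. unfold exp. destruct (exist_exp x) as [l Hl]; simpl.
  apply sum_incr; [exact Hl|]. intros i. apply Rmult_le_pos.
  - apply Rlt_le, Rinv_0_lt_compat, INR_fact_lt_0.
  - now apply pow_le.
Qed.

Lemma pow_div_fact_le_exp x j : 0 <= x -> x ^ j / INR (fact j) <= exp x.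
Proof.
  intros Hx. eapply Rle_trans; [|apply (exp_series_partial_le x j Hx)].
  destruct j as [|j]; [simpl; unfold Rdiv; rewrite Rinv_1; lra|].
  change (sum_f_R0 ?f (S j)) with (sum_f_R0 f j + f (S j)). cbv beta.
  assert (0 <= sum_f_R0 (fun i => / INR (fact i) * x ^ i) j).
  { apply cond_pos_sum; intros i. apply Rmult_le_pos.
    - apply Rlt_le, Rinv_0_lt_compat, INR_fact_lt_0.
    - now apply pow_le. }
  unfold Rdiv. rewrite (Rmult_comm (x ^ S j)). lra.
Qed.

Lemma poi_nonneg x j : 0 <= x -> 0 <= poi x j.
Proof.
  intros Hx. unfold poi. apply Rmult_le_pos; [apply Rmult_le_pos|].
  - apply Rlt_le, exp_pos.
  - now apply pow_le.
  - apply Rlt_le, Rinv_0_lt_compat, INR_fact_lt_0.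
Qed.

Lemma poi_0 j : (1 <= j)%nat -> poi 0 j = 0.
Proof. intros H. unfold poi. rewrite pow_i by lia. unfold Rdiv; ring. Qed.

(* [sum_{j >= 1} poi(x, j) = 1 - e^{-x} <= x]: shifting the index gives
   [x e^{-x} sum_i x^i / (i+1)! <= x e^{-x} e^x]. *)
Lemma rsum_poi_le x N : 0 <= x -> rsum (seq 1 N) (fun j => poi x j) <= x.
Proof.
  intros Hx. destruct N as [|N]; [simpl seq; rewrite rsum_nil; lra|].
  rewrite <- seq_shift, rsum_map.
  apply Rle_trans with
    (rsum (seq 0 (S N)) (fun i => x * exp (- x) * (/ INR (fact i) * x ^ i))).
  - apply rsum_le; intros i _. unfold poi. simpl pow. rewrite fact_simpl, mult_INR.
    assert (0 < INR (fact i)) by apply INR_fact_lt_0.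
    assert (1 <= INR (S i)) by (rewrite S_INR; pose proof (pos_INR i); lra).
    assert (0 <= x ^ i) by now apply pow_le.
    pose proof (exp_pos (- x)).
    replace (exp (- x) * (x * x ^ i) / (INR (S i) * INR (fact i))) with
      ((x * exp (- x) * (/ INR (fact i) * x ^ i)) * / INR (S i)) by (field; lra).
    assert (0 <= x * exp (- x) * (/ INR (fact i) * x ^ i)).
    { apply Rmult_le_pos; [apply Rmult_le_pos; lra|].
      apply Rmult_le_pos; [apply Rlt_le, Rinv_0_lt_compat; lra | auto]. }
    assert (/ INR (S i) <= 1) by (rewrite <- Rinv_1; apply Rinv_le_contravar; lra).
    assert (0 <= / INR (S i)) by (apply Rlt_le, Rinv_0_lt_compat; lra).
    nra.
  - rewrite rsum_scal, rsum_seq0.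
    pose proof (exp_series_partial_le x N Hx). pose proof (exp_pos (- x)).
    apply Rle_trans with (x * exp (- x) * exp x).
    + apply Rmult_le_compat_l; [apply Rmult_le_pos|]; lra.
    + rewrite Rmult_assoc, <- exp_plus, Rplus_opp_l, exp_0; lra.
Qed.

Lemma poi_le_exp_half x j : 0 <= x -> poi x j <= 2 ^ j * exp (- (x / 2)).
Proof.
  intros Hx. unfold poi. pose proof (pow_div_fact_le_exp (x / 2) j ltac:(lra)).
  replace (exp (- x) * x ^ j / INR (fact j))
    with (2 ^ j * ((x / 2) ^ j / INR (fact j)) * exp (- x)).
  2:{ replace (x ^ j) with (2 ^ j * (x / 2) ^ j)
        by (rewrite <- Rpow_mult_distr; f_equal; field).
      field. pose proof (INR_fact_lt_0 j); lra. }
  replace (exp (- (x / 2))) with (exp (x / 2) * exp (- x))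
    by (rewrite <- exp_plus; f_equal; field).
  rewrite <- Rmult_assoc. apply Rmult_le_compat_r; [apply Rlt_le, exp_pos|].
  apply Rmult_le_compat_l; [apply pow_le; lra | auto].
Qed.

Lemma pow2_le_exp j : 2 ^ j <= exp (INR j).
Proof.
  induction j as [|j IH]; [simpl; rewrite exp_0; lra|].
  rewrite S_INR, exp_plus. simpl pow. pose proof (exp_ineq1 1 ltac:(lra)).
  rewrite Rmult_comm. apply Rmult_le_compat; try lra. apply pow_le; lra.
Qed.

(** * Buckets *)

Definition nlog2 (n : nat) : R := INR n * ln (INR n) ^ 2.

Section Buckets.

Variable n : nat.
Hypothesis nlog2_pos : 0 < nlog2 n.

Let inv_nlog2_pos : 0 < / nlog2 n.
Proof. now apply Rinv_0_lt_compat. Qed.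

Lemma in_bucketb_bounds k x : in_bucketb n k x = true ->
  INR k / nlog2 n < x <= INR (S k) / nlog2 n.
Proof.
  unfold in_bucketb, nlog2.
  repeat match goal with
  | |- context [Rlt_dec ?a ?b] => destruct (Rlt_dec a b)
  | |- context [Rle_dec ?a ?b] => destruct (Rle_dec a b)
  end; easy.
Qed.

Lemma div_nlog2_le a b : a <= b -> a / nlog2 n <= b / nlog2 n.
Proof. intros H. apply Rmult_le_compat_r; lra. Qed.

Lemma INR_div_nlog2_ge0 k : 0 <= INR k / nlog2 n.
Proof. apply Rmult_le_pos; [apply pos_INR | lra]. Qed.

Lemma rsum_bucket_indicator K x :
  rsum (seq 0 K) (fun k => if in_bucketb n k x then 1 else 0) =
  if Rlt_dec 0 x then if Rle_dec x (INR K / nlog2 n) then 1 else 0 else 0.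
Proof.
  induction K as [|K IH].
  - simpl seq. rewrite rsum_nil. simpl INR.
    destruct (Rlt_dec 0 x); auto. destruct (Rle_dec x (0 / _)); auto.
    unfold Rdiv in *; lra.
  - rewrite seq_S, rsum_app, IH, rsum_cons, rsum_nil. simpl (0 + K)%nat.
    pose proof (INR_div_nlog2_ge0 K).
    assert (INR K / nlog2 n <= INR (S K) / nlog2 n)
      by (apply div_nlog2_le; rewrite S_INR; lra).
    unfold in_bucketb; fold (nlog2 n).
    repeat match goal with
    | |- context [Rlt_dec ?a ?b] => destruct (Rlt_dec a b)
    | |- context [Rle_dec ?a ?b] => destruct (Rle_dec a b)
    end; lra.
Qed.

Lemma rsum_bucket_indicator_in K x : 0 < x <= INR K / nlog2 n ->
  rsum (seq 0 K) (fun k => if in_bucketb n k x then 1 else 0) = 1.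
Proof.
  intros [H1 H2]. rewrite rsum_bucket_indicator.
  destruct (Rlt_dec 0 x); [|lra]. destruct (Rle_dec x _); lra.
Qed.

Lemma in_bucketb_range K k x : In k (seq 0 K) -> in_bucketb n k x = true ->
  0 < x <= INR K / nlog2 n.
Proof.
  intros Hk Hb. apply in_seq in Hk. pose proof (in_bucketb_bounds k x Hb).
  pose proof (INR_div_nlog2_ge0 k).
  assert (INR (S k) / nlog2 n <= INR K / nlog2 n) by (apply div_nlog2_le, le_INR; lia).
  lra.
Qed.

(* Rounding a probability up to the top of its bucket moves it by at most
   one bucket width. *)
Lemma bucket_rounding K x m : 0 < x <= INR K / nlog2 n ->
  Rabs (Rabs (x - m) - rsum (seq 0 K) (fun k =>
          (if in_bucketb n k x then 1 else 0) * Rabs (INR (S k) / nlog2 n - m)))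
  <= / nlog2 n.
Proof.
  intros Hx. pose proof (rsum_bucket_indicator_in K x Hx) as Hone.
  replace (Rabs (x - m)) with
    (rsum (seq 0 K) (fun k => (if in_bucketb n k x then 1 else 0) * Rabs (x - m)))
    by (rewrite rsum_scal_r, Hone; ring).
  replace (/ nlog2 n) with
    (rsum (seq 0 K) (fun k => (if in_bucketb n k x then 1 else 0) * / nlog2 n))
    by (rewrite rsum_scal_r, Hone; ring).
  rewrite <- rsum_minus. eapply Rle_trans; [apply rsum_abs|].
  apply rsum_le. intros k _. destruct (in_bucketb n k x) eqn:Hb.
  - pose proof (in_bucketb_bounds k x Hb) as [Hlo Hhi].
    assert (INR (S k) / nlog2 n - / nlog2 n = INR k / nlog2 n)
      by (rewrite S_INR; field; lra).
    rewrite <- !Rmult_minus_distr_l, !Rmult_1_l.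
    eapply Rle_trans; [apply Rabs_triang_inv2|].
    replace (x - m - (INR (S k) / nlog2 n - m)) with (x - INR (S k) / nlog2 n) by ring.
    apply Rabs_le; lra.
  - rewrite <- Rmult_minus_distr_l, !Rmult_0_l, Rabs_R0; lra.
Qed.

End Buckets.

(** * Elements beyond the last bucket *)

Lemma Rpower_15_le_sqr l : 1 <= l -> Rpower l 1.5 <= l ^ 2.
Proof.
  intros Hl. replace (l ^ 2) with (Rpower l (INR 2)) by (apply Rpower_pow; lra).
  apply Rle_Rpower; auto. simpl; lra.
Qed.

Section BeyondBuckets.

Variables n K : nat.
Hypothesis ln_ge1 : 1 <= ln (INR n).
Hypothesis n_pos : 0 < INR n.
Hypothesis K_large : 6 * (ln (INR n) ^ 2) ^ 2 <= INR K.

Lemma nlog2_pos_of_ln_ge1 : 0 < nlog2 n.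
Proof. unfold nlog2. apply Rmult_lt_0_compat; [auto | nra]. Qed.

Lemma beyond_buckets_mean_large x : INR K / nlog2 n < x -> 6 * ln (INR n) ^ 2 < INR n * x.
Proof.
  intros Hx. unfold nlog2 in Hx. set (l := ln (INR n)) in *.
  assert (1 <= l ^ 2) by nra.
  assert (6 * l ^ 2 / INR n <= INR K / (INR n * l ^ 2)).
  { replace (6 * l ^ 2 / INR n) with (6 * (l ^ 2) ^ 2 / (INR n * l ^ 2)) by (field; lra).
    apply Rmult_le_compat_r; [apply Rlt_le, Rinv_0_lt_compat; nra | auto]. }
  assert (Hlt : 6 * l ^ 2 / INR n < x) by lra.
  apply (Rmult_lt_compat_l (INR n)) in Hlt; auto.
  replace (INR n * (6 * l ^ 2 / INR n)) with (6 * l ^ 2) in Hlt by (field; lra). exact Hlt.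
Qed.

(* Faithfulness (1) keeps an element seen fewer than [log^2 n] times inside
   the buckets: otherwise its count deviates from [n p(a)] by more than [5/6]
   of the mean, which exceeds both [log^1.5 n] and [sqrt (n p(a) log^1.5 n)]. *)
Lemma faithful_rare_in_buckets x j :
  INR j < ln (INR n) ^ 2 ->
  Rabs (INR n * x - INR j) <
    Rmax (Rpower (ln (INR n)) 1.5) (sqrt (INR n * x * Rpower (ln (INR n)) 1.5)) ->
  x <= INR K / nlog2 n.
Proof.
  intros Hj Hf. destruct (Rle_dec x (INR K / nlog2 n)) as [|Hc]; auto. exfalso.
  pose proof (beyond_buckets_mean_large x ltac:(lra)) as Hlam.
  set (l := ln (INR n)) in *. set (lam := INR n * x) in *.
  pose proof (Rpower_15_le_sqr l ln_ge1). assert (1 <= l ^ 2) by nra.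
  assert (0 <= Rpower l 1.5) by (unfold Rpower; apply Rlt_le, exp_pos).
  assert (sqrt (lam * Rpower l 1.5) <= 5 / 6 * lam).
  { rewrite <- (sqrt_square (5 / 6 * lam)) by lra. apply sqrt_le_1_alt. nra. }
  assert (Rmax (Rpower l 1.5) (sqrt (lam * Rpower l 1.5)) <= 5 / 6 * lam)
    by (apply Rmax_lub; lra).
  rewrite Rabs_right in Hf by lra. lra.
Qed.

Lemma exp_m2ln : exp (- (2 * ln (INR n))) = / INR n ^ 2.
Proof.
  rewrite exp_Ropp. f_equal.
  replace (2 * ln (INR n)) with (ln (INR n) + ln (INR n)) by ring.
  rewrite exp_plus, exp_ln; auto. ring.
Qed.

(* Beyond the buckets [poi(n x, j) <= 2^j e^{-n x / 2} <= e^{-2 log^2 n} <= n^{-2}]. *)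
Lemma beyond_buckets_dev_le j x m :
  (1 <= j)%nat -> INR j < ln (INR n) ^ 2 -> 0 <= m <= 1 -> 0 <= x <= 1 ->
  ~ (0 < x <= INR K / nlog2 n) ->
  Rabs (x - m) * poi (INR n * x) j <= x / INR n.
Proof.
  intros Hj1 Hj Hm Hx Hout.
  destruct (Req_dec x 0) as [->|Hx0].
  { rewrite Rmult_0_r, poi_0 by auto. unfold Rdiv; lra. }
  assert (Hbeyond : INR K / nlog2 n < x).
  { destruct (Rle_dec x (INR K / nlog2 n)); [exfalso; apply Hout; split; lra | lra]. }
  pose proof (beyond_buckets_mean_large x Hbeyond) as Hlam.
  set (l := ln (INR n)) in *. assert (1 <= l ^ 2) by nra.
  assert (Hpoi : poi (INR n * x) j <= / INR n ^ 2).
  { eapply Rle_trans; [apply poi_le_exp_half; lra|].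
    eapply Rle_trans; [apply Rmult_le_compat_r; [apply Rlt_le, exp_pos | apply pow2_le_exp]|].
    rewrite <- exp_plus, <- exp_m2ln. apply exp_le_mono. fold l. nra. }
  assert (Habs : Rabs (x - m) <= 1) by (apply Rabs_le; lra).
  pose proof (poi_nonneg (INR n * x) j ltac:(nra)).
  assert (/ INR n ^ 2 <= x / INR n).
  { assert (1 / INR n <= x).
    { apply Rle_trans with (6 * l ^ 2 / INR n); [|apply Rmult_le_reg_l with (INR n); auto].
      - apply Rmult_le_compat_r; [apply Rlt_le, Rinv_0_lt_compat|]; lra.
      - replace (INR n * (6 * l ^ 2 / INR n)) with (6 * l ^ 2) by (field; lra). lra. }
    replace (/ INR n ^ 2) with ((1 / INR n) / INR n) by (field; lra).
    apply Rmult_le_compat_r; [apply Rlt_le, Rinv_0_lt_compat|]; lra. }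
  apply Rle_trans with (1 * / INR n ^ 2); [|lra].
  apply Rmult_le_compat; auto. apply Rabs_pos.
Qed.

End BeyondBuckets.

(** * Comparing the error and the deviation through the buckets *)

Section BucketComparison.

Variables (D : nat) (p : nat -> R) (n : nat) (sample : list nat) (j : nat) (m : R) (K : nat).
Hypothesis nlog2_pos : 0 < nlog2 n.

Lemma error_vs_bucketed :
  (forall a, In a (domain D) -> occ sample a = j -> 0 < p a <= INR K / nlog2 n) ->
  Rabs (rsum (domain D) (fun a => if Nat.eqb (occ sample a) j then Rabs (p a - m) else 0)
        - rsum (seq 0 K) (fun k => INR (B_S D p sample n j k) * Rabs (INR (S k) / nlog2 n - m)))
  <= / nlog2 n * rsum (domain D) (fun a => if Nat.eqb (occ sample a) j then 1 else 0).
Proof.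
  intros Hin.
  rewrite (rsum_ext (seq 0 K) _ (fun k => rsum (domain D) (fun a =>
     (if in_bucketb n k (p a) then (if Nat.eqb (occ sample a) j then 1 else 0) else 0)
       * Rabs (INR (S k) / nlog2 n - m))))
    by (intros k _; now rewrite B_S_domain, rsum_scal_r).
  rewrite <- rsum_swap, <- rsum_minus, <- rsum_scal.
  eapply Rle_trans; [apply rsum_abs|]. apply rsum_le. intros a Ha.
  destruct (Nat.eqb (occ sample a) j) eqn:Ho.
  - apply Nat.eqb_eq in Ho. rewrite Rmult_1_r.
    eapply Rle_trans; [|apply (bucket_rounding n nlog2_pos K (p a) m (Hin a Ha Ho))].
    right. do 2 f_equal.
  - rewrite rsum_zero; [rewrite Rminus_0_r, Rabs_R0; lra|].
    intros k _. destruct (in_bucketb n k (p a)); ring.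
Qed.

Lemma dev_vs_bucketed :
  0 < INR n ->
  (forall a, In a (domain D) -> 0 <= p a) ->
  (forall a, In a (domain D) -> ~ (0 < p a <= INR K / nlog2 n) ->
      Rabs (p a - m) * poi (INR n * p a) j <= p a / INR n) ->
  Rabs (rsum (domain D) (fun a => Rabs (p a - m) * poi (INR n * p a) j)
        - rsum (seq 0 K) (fun k => B_poi D p n j k * Rabs (INR (S k) / nlog2 n - m)))
  <= / nlog2 n * rsum (domain D) (fun a => poi (INR n * p a) j)
     + rsum (domain D) (fun a => p a / INR n).
Proof.
  intros Hn Hpos Htail.
  rewrite (rsum_ext (seq 0 K) _ (fun k => rsum (domain D) (fun a =>
     (if in_bucketb n k (p a) then 1 else 0)
       * (poi (INR n * p a) j * Rabs (INR (S k) / nlog2 n - m))))).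
  2:{ intros k _. rewrite B_poi_domain, <- rsum_scal_r. apply rsum_ext; intros a _.
      destruct (in_bucketb n k (p a)); ring. }
  rewrite <- rsum_swap, <- rsum_minus, <- rsum_scal, <- rsum_plus.
  eapply Rle_trans; [apply rsum_abs|]. apply rsum_le. intros a Ha.
  pose proof (Hpos a Ha).
  assert (0 <= p a / INR n) by (apply Rmult_le_pos; [lra | apply Rlt_le, Rinv_0_lt_compat; lra]).
  set (q := poi (INR n * p a) j). assert (0 <= q) by (apply poi_nonneg; nra).
  assert (0 <= / nlog2 n * q) by (apply Rmult_le_pos; [apply Rlt_le, Rinv_0_lt_compat|]; lra).
  assert (Hin_or_out : 0 < p a <= INR K / nlog2 n \/ ~ (0 < p a <= INR K / nlog2 n)).
  { destruct (Rlt_dec 0 (p a)), (Rle_dec (p a) (INR K / nlog2 n)); [left|right ..]; lra. }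
  destruct Hin_or_out as [Hin|Hout].
  - pose proof (bucket_rounding n nlog2_pos K (p a) m Hin) as Hr.
    rewrite (rsum_ext _ _ (fun k => q * ((if in_bucketb n k (p a) then 1 else 0)
                                 * Rabs (INR (S k) / nlog2 n - m))))
      by (intros; ring).
    rewrite rsum_scal, (Rmult_comm _ q), <- Rmult_minus_distr_l, Rabs_mult.
    rewrite (Rabs_right q) by lra.
    apply Rle_trans with (q * / nlog2 n); [apply Rmult_le_compat_l|]; lra.
  - rewrite rsum_zero.
    + pose proof (Htail a Ha Hout) as Ht. fold q in Ht.
      rewrite Rminus_0_r, Rabs_right by (apply Rle_ge, Rmult_le_pos; [apply Rabs_pos | lra]).
      lra.
    + intros k Hk. destruct (in_bucketb n k (p a)) eqn:Hb; [|ring].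
      exfalso; apply Hout. exact (in_bucketb_range n nlog2_pos K k (p a) Hk Hb).
Qed.

Lemma bucketed_counts_close :
  0 <= m ->
  (forall k, Rabs (B_poi D p n j k - INR (B_S D p sample n j k)) < Rpower (INR n) 0.6) ->
  Rabs (rsum (seq 0 K) (fun k => INR (B_S D p sample n j k) * Rabs (INR (S k) / nlog2 n - m))
        - rsum (seq 0 K) (fun k => B_poi D p n j k * Rabs (INR (S k) / nlog2 n - m)))
  <= INR K * (Rpower (INR n) 0.6 * (INR K / nlog2 n + m)).
Proof.
  intros Hm HB. rewrite <- rsum_minus. eapply Rle_trans; [apply rsum_abs|].
  rewrite <- (length_seq K 0) at 2. rewrite <- rsum_const. apply rsum_le. intros k Hk.
  apply in_seq in Hk.
  rewrite <- Rmult_minus_distr_r, Rabs_mult, Rabs_Rabsolu, Rabs_minus_sym.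
  apply Rmult_le_compat; try apply Rabs_pos; [now left|].
  pose proof (INR_div_nlog2_ge0 n nlog2_pos (S k)).
  assert (INR (S k) / nlog2 n <= INR K / nlog2 n)
    by (apply div_nlog2_le, le_INR; auto; lia).
  apply Rabs_le; lra.
Qed.

End BucketComparison.

(** * Summing over the counts [1 <= j < log^2 n] *)

Lemma in_js n j : In j (js n) -> (1 <= j)%nat /\ INR j < ln (INR n) ^ 2.
Proof.
  unfold js. intros H. apply filter_In in H as [H1 H2]. apply in_seq in H1.
  split; [lia|]. destruct (Rlt_dec (INR j) (ln (INR n) ^ 2)); easy.
Qed.

Lemma NoDup_js n : NoDup (js n).
Proof. apply NoDup_filter, seq_NoDup. Qed.

Lemma length_js_le n : INR (length (js n)) <= ln (INR n) ^ 2 + 1.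
Proof.
  unfold js. eapply Rle_trans; [apply le_INR, filter_length_le|]. rewrite length_seq.
  pose proof (archimed (ln (INR n) ^ 2)) as [H1 H2].
  assert (0 <= ln (INR n) ^ 2) by apply pow2_ge_0.
  rewrite INR_IZR_INZ, Z2Nat.id; [lra | apply le_IZR; lra].
Qed.

Lemma rsum_js_poi_le n x : 0 <= x -> rsum (js n) (fun j => poi x j) <= x.
Proof.
  intros Hx. eapply Rle_trans; [apply rsum_filter_le|apply rsum_poi_le; auto].
  intros; now apply poi_nonneg.
Qed.

Lemma rsum_count_occ_le (dom S : list nat) : NoDup dom ->
  rsum dom (fun a => INR (count_occ Nat.eq_dec S a)) <= INR (length S).
Proof.
  intros Hd. induction S as [|b S IH].
  - rewrite rsum_zero; [simpl; lra | reflexivity].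
  - simpl length. rewrite S_INR.
    rewrite (rsum_ext _ _ (fun a => INR (count_occ Nat.eq_dec S a) + (if Nat.eqb b a then 1 else 0))).
    + rewrite rsum_plus. pose proof (rsum_eq_indicator_le1 dom b Hd). lra.
    + intros a _. simpl count_occ. destruct (Nat.eq_dec b a) as [<-|E].
      * rewrite Nat.eqb_refl, S_INR; ring.
      * apply Nat.eqb_neq in E. rewrite E; ring.
Qed.

(* Each element is counted for at most one [j], and only if it occurs at all. *)
Lemma rsum_js_seen_le D S n :
  rsum (js n) (fun j => rsum (domain D) (fun a => if Nat.eqb (occ S a) j then 1 else 0))
  <= INR (length S).
Proof.
  rewrite rsum_swap. eapply Rle_trans; [|apply (rsum_count_occ_le (domain D) S (seq_NoDup D 0))].
  apply rsum_le. intros a _. unfold occ. destruct (count_occ Nat.eq_dec S a) as [|c].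
  - rewrite rsum_zero; [simpl; lra|]. intros j Hj. destruct (in_js n j Hj).
    destruct (Nat.eqb 0 j) eqn:E; [apply Nat.eqb_eq in E; lia | reflexivity].
  - eapply Rle_trans; [apply rsum_eq_indicator_le1, NoDup_js|].
    rewrite S_INR; pose proof (pos_INR c); lra.
Qed.

Lemma distribution_in_01 D p a : is_distribution D p -> In a (domain D) -> 0 <= p a <= 1.
Proof.
  intros [Hp0 Hp1] Ha.
  assert (Hdom : forall b, In b (domain D) -> 0 <= p b)
    by (intros b Hb; apply Hp0; unfold domain in Hb; apply in_seq in Hb; lia).
  split; [auto|]. rewrite <- Hp1. now apply rsum_ge_term.
Qed.

Definition bucket_slack (n K : nat) : R :=
  1 / INR n + INR K * (Rpower (INR n) 0.6 * (INR K / nlog2 n + 2 / INR n * ln (INR n) ^ 2)).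

Lemma Rinv_nonneg x : 0 <= x -> 0 <= / x.
Proof. intros [H|<-]; [left; now apply Rinv_0_lt_compat | rewrite Rinv_0; lra]. Qed.

Lemma bucket_slack_nonneg n K : 0 <= bucket_slack n K.
Proof.
  pose proof (pos_INR n). pose proof (pow2_ge_0 (ln (INR n))).
  unfold bucket_slack, nlog2, Rdiv. apply Rplus_le_le_0_compat.
  - apply Rmult_le_pos, Rinv_nonneg; lra.
  - apply Rmult_le_pos; [apply pos_INR|].
    apply Rmult_le_pos; [unfold Rpower; apply Rlt_le, exp_pos|].
    apply Rplus_le_le_0_compat; [apply Rmult_le_pos, Rinv_nonneg; [apply pos_INR | nra]|].
    apply Rmult_le_pos; [apply Rmult_le_pos, Rinv_nonneg|]; lra.
Qed.

Section TotalGap.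

Variables (D : nat) (p : nat -> R) (n : nat) (m : nat -> R) (sample : list nat) (K : nat).
Hypothesis p_distribution : is_distribution D p.
Hypothesis m_bounds : forall j : nat, (1 <= j)%nat -> INR j < ln (INR n) ^ 2 ->
  0 <= m j <= 1 /\ m j < 2 / INR n * ln (INR n) ^ 2.
Hypothesis sample_support : forall a, In a sample -> (a < D)%nat /\ 0 < p a.
Hypothesis sample_faithful : faithful D p n sample.
Hypothesis ln_ge1 : 1 <= ln (INR n).
Hypothesis n_pos : 0 < INR n.
Hypothesis K_large : 6 * (ln (INR n) ^ 2) ^ 2 <= INR K.

Lemma error_dev_gap_at j : In j (js n) ->
  Rabs (rsum (domain D) (fun a => if Nat.eqb (occ sample a) j then Rabs (p a - m j) else 0)
        - dev D p j n (m j))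
  <= / nlog2 n * rsum (domain D) (fun a => if Nat.eqb (occ sample a) j then 1 else 0)
     + / nlog2 n * rsum (domain D) (fun a => poi (INR n * p a) j)
     + bucket_slack n K.
Proof.
  intros Hj. destruct (in_js n j Hj) as [Hj1 Hj2]. destruct (m_bounds j Hj1 Hj2) as [Hm Hm2].
  destruct sample_faithful as [_ [Hcount Hbuckets]].
  pose proof (nlog2_pos_of_ln_ge1 n ln_ge1 n_pos) as HQ.
  assert (Hseen : forall a, In a (domain D) -> occ sample a = j ->
                    0 < p a <= INR K / nlog2 n).
  { intros a Ha Ho. apply in_seq in Ha. split.
    - apply sample_support, (count_occ_In Nat.eq_dec). unfold occ in Ho. lia.
    - apply (faithful_rare_in_buckets n K ln_ge1 n_pos K_large (p a) j Hj2).
      rewrite <- Ho. apply Hcount; lia. }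
  pose proof (error_vs_bucketed D p n sample j (m j) K HQ Hseen) as HE.
  pose proof (bucketed_counts_close D p n sample j (m j) K HQ (proj1 Hm)
                (fun k => Hbuckets j k Hj2)) as HM.
  pose proof (dev_vs_bucketed D p n j (m j) K HQ n_pos
                (fun a Ha => proj1 (distribution_in_01 D p a p_distribution Ha))
                (fun a Ha Hout => beyond_buckets_dev_le n K ln_ge1 n_pos K_large j (p a) (m j)
                     Hj1 Hj2 Hm (distribution_in_01 D p a p_distribution Ha) Hout)) as HD.
  assert (Hmass : rsum (domain D) (fun a => p a / INR n) = 1 / INR n).
  { unfold Rdiv. rewrite rsum_scal_r. now destruct p_distribution as [_ ->]. }
  assert (INR K * (Rpower (INR n) 0.6 * (INR K / nlog2 n + m j)) <=
          INR K * (Rpower (INR n) 0.6 * (INR K / nlog2 n + 2 / INR n * ln (INR n) ^ 2))).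
  { apply Rmult_le_compat_l; [apply pos_INR|]. apply Rmult_le_compat_l; [|lra].
    unfold Rpower; apply Rlt_le, exp_pos. }
  rewrite dev_domain. unfold bucket_slack.
  rewrite Hmass, Rabs_minus_sym in HD.
  set (E := rsum (domain D) _) in *. set (Dv := rsum (domain D) (fun a => _ * _)) in *.
  set (A := rsum (seq 0 K) (fun k => INR _ * _)) in *.
  set (P := rsum (seq 0 K) (fun k => B_poi _ _ _ _ _ * _)) in *.
  replace (E - Dv) with ((E - A) + (A - P) + (P - Dv)) by ring.
  pose proof (Rabs_triang (E - A + (A - P)) (P - Dv)).
  pose proof (Rabs_triang (E - A) (A - P)). lra.
Qed.

Lemma total_gap_le :
  Rabs (total_error D p sample n m - total_dev D p n m)
  <= / nlog2 n * INR n + / nlog2 n * INR n + (ln (INR n) ^ 2 + 1) * bucket_slack n K.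
Proof.
  pose proof (nlog2_pos_of_ln_ge1 n ln_ge1 n_pos) as HQ.
  destruct sample_faithful as [Hlen _].
  unfold total_error, total_dev.
  rewrite (rsum_ext (js n) (fun j => rsum (filter _ _) _) _ (fun j _ => rsum_filter _ _ _)).
  rewrite <- rsum_minus. eapply Rle_trans; [apply rsum_abs|].
  eapply Rle_trans; [apply rsum_le; exact error_dev_gap_at|].
  rewrite !rsum_plus, rsum_const, !rsum_scal.
  pose proof (rsum_js_seen_le D sample n) as Hseen. rewrite Hlen in Hseen.
  assert (Hpoi : rsum (js n) (fun j => rsum (domain D) (fun a => poi (INR n * p a) j)) <= INR n).
  { rewrite rsum_swap. apply Rle_trans with (rsum (domain D) (fun a => INR n * p a)).
    - apply rsum_le. intros a Ha. apply rsum_js_poi_le.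
      pose proof (distribution_in_01 D p a p_distribution Ha). nra.
    - rewrite rsum_scal. destruct p_distribution as [_ ->]. lra. }
  pose proof (bucket_slack_nonneg n K).
  pose proof (length_js_le n). assert (0 < / nlog2 n) by now apply Rinv_0_lt_compat.
  apply Rplus_le_compat; [apply Rplus_le_compat; apply Rmult_le_compat_l; lra|].
  apply Rmult_le_compat_r; auto.
Qed.

End TotalGap.

(** * The error bound and its decay *)

Definition nbuckets (n : nat) : nat := Z.to_nat (up (6 * (ln (INR n) ^ 2) ^ 2)).

Lemma nbuckets_bounds n :
  6 * (ln (INR n) ^ 2) ^ 2 <= INR (nbuckets n) <= 6 * (ln (INR n) ^ 2) ^ 2 + 1.
Proof.
  unfold nbuckets. pose proof (archimed (6 * (ln (INR n) ^ 2) ^ 2)) as [H1 H2].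
  assert (0 <= (ln (INR n) ^ 2) ^ 2) by apply pow2_ge_0.
  rewrite (INR_IZR_INZ (Z.to_nat _)), Z2Nat.id; [lra | apply le_IZR; lra].
Qed.

Definition gap_eps (n : nat) : R :=
  2 / ln (INR n) ^ 2 + 128 * (ln (INR n) ^ 2) ^ 4 / Rpower (INR n) 0.4.

Lemma gap_eps_nonneg n : 0 <= gap_eps n.
Proof.
  unfold gap_eps, Rdiv. apply Rplus_le_le_0_compat; apply Rmult_le_pos.
  - lra.
  - apply Rinv_nonneg, pow2_ge_0.
  - apply Rmult_le_pos; [lra | apply pow_le, pow2_ge_0].
  - apply Rinv_nonneg. unfold Rpower; apply Rlt_le, exp_pos.
Qed.

Lemma bucket_slack_le n K : 1 <= ln (INR n) -> 0 < INR n ->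
  INR K <= 6 * (ln (INR n) ^ 2) ^ 2 + 1 ->
  bucket_slack n K <= 64 * (ln (INR n) ^ 2) ^ 3 / Rpower (INR n) 0.4.
Proof.
  intros Hl Hn HK. unfold bucket_slack, nlog2.
  set (L := ln (INR n) ^ 2) in *. assert (HL : 1 <= L) by (unfold L; nra).
  assert (Hn1 : 1 <= INR n).
  { destruct (Rle_dec 1 (INR n)) as [|Hlt]; auto.
    assert (ln (INR n) < 0) by (rewrite <- ln_1; apply ln_increasing; lra). lra. }
  set (r := Rpower (INR n) 0.4). set (s := Rpower (INR n) 0.6).
  assert (Hrs : r * s = INR n).
  { unfold r, s. rewrite <- Rpower_plus. replace (0.4 + 0.6) with 1 by lra.
    apply Rpower_1; lra. }
  assert (Hr1 : 1 <= r) by (unfold r; rewrite <- (Rpower_O (INR n)) by lra; apply Rle_Rpower; lra).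
  assert (Hrn : r <= INR n)
    by (unfold r; rewrite <- (Rpower_1 (INR n)) at 2 by lra; apply Rle_Rpower; lra).
  assert (Hs0 : 0 < s) by (unfold s, Rpower; apply exp_pos).
  assert (HK7 : INR K <= 7 * L ^ 2) by nra.
  assert (HA : INR K / (INR n * L) + 2 / INR n * L <= 9 * L / INR n).
  { apply Rle_trans with (7 * L ^ 2 / (INR n * L) + 2 / INR n * L).
    - apply Rplus_le_compat_r, Rmult_le_compat_r; [apply Rlt_le, Rinv_0_lt_compat; nra | auto].
    - right; field; lra. }
  assert (0 <= INR K / (INR n * L) + 2 / INR n * L).
  { apply Rplus_le_le_0_compat.
    - apply Rmult_le_pos; [apply pos_INR | apply Rlt_le, Rinv_0_lt_compat; nra].
    - apply Rmult_le_pos; [apply Rmult_le_pos; [lra | apply Rlt_le, Rinv_0_lt_compat; lra] | lra]. }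
  assert (HB : INR K * (s * (INR K / (INR n * L) + 2 / INR n * L)) <= 63 * L ^ 3 / r).
  { apply Rle_trans with (7 * L ^ 2 * (s * (9 * L / INR n))).
    - apply Rmult_le_compat; [apply pos_INR | apply Rmult_le_pos; lra | auto |].
      apply Rmult_le_compat_l; lra.
    - right. rewrite <- Hrs. field. lra. }
  assert (Hu : 1 / INR n <= L ^ 3 / r).
  { apply Rle_trans with (1 / r).
    - apply Rmult_le_compat_l; [lra | apply Rinv_le_contravar; lra].
    - apply Rmult_le_compat_r; [apply Rlt_le, Rinv_0_lt_compat; lra | nra]. }
  unfold Rdiv in *. lra.
Qed.

Lemma total_gap_le_gap_eps n K : 1 <= ln (INR n) -> 0 < INR n ->
  INR K <= 6 * (ln (INR n) ^ 2) ^ 2 + 1 ->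
  / nlog2 n * INR n + / nlog2 n * INR n + (ln (INR n) ^ 2 + 1) * bucket_slack n K
  <= gap_eps n.
Proof.
  intros Hl Hn HK. pose proof (bucket_slack_le n K Hl Hn HK) as Hslack.
  unfold gap_eps, nlog2 in *. set (L := ln (INR n) ^ 2) in *.
  assert (HL : 1 <= L) by (unfold L; nra).
  set (r := Rpower (INR n) 0.4) in *. assert (0 < r) by (unfold r, Rpower; apply exp_pos).
  pose proof (bucket_slack_nonneg n K).
  replace (/ (INR n * L) * INR n) with (1 / L) by (field; lra).
  replace (128 * L ^ 4 / r) with (2 * L * (64 * L ^ 3 / r)) by (field; lra).
  assert (Hinv : 1 / L + 1 / L <= 2 / L) by lra.
  assert ((L + 1) * bucket_slack n K <= 2 * L * (64 * L ^ 3 / r))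
    by (apply Rmult_le_compat; lra).
  lra.
Qed.

Lemma exp_INR_mul k x : exp (INR k * x) = exp x ^ k.
Proof.
  induction k as [|k IH]; [simpl; rewrite Rmult_0_l, exp_0; auto|].
  rewrite S_INR, Rmult_plus_distr_r, exp_plus, IH, Rmult_1_l. simpl; ring.
Qed.

(* From [t <= e^t] at [t = c ln x / k]. *)
Lemma pow_ln_le_Rpower x k c : 0 < x -> 0 <= ln x -> 0 < c -> (0 < k)%nat ->
  ln x ^ k <= (INR k / c) ^ k * Rpower x c.
Proof.
  intros Hx Hl Hc Hk. assert (0 < INR k) by (apply lt_0_INR; lia).
  set (t := c * ln x / INR k).
  assert (0 <= t) by (apply Rmult_le_pos; [nra | apply Rlt_le, Rinv_0_lt_compat; lra]).
  replace (ln x) with (INR k / c * t) at 1 by (unfold t; field; lra).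
  rewrite Rpow_mult_distr. apply Rmult_le_compat_l; [apply pow_le, Rmult_le_pos; [lra | apply Rlt_le, Rinv_0_lt_compat; lra]|].
  replace (Rpower x c) with (exp t ^ k).
  - apply pow_incr. pose proof (exp_ineq1_le t). lra.
  - rewrite <- exp_INR_mul. unfold Rpower, t. f_equal. field. lra.
Qed.

Lemma gap_eps_cv : Un_cv gap_eps 0.
Proof.
  intros e He.
  set (M := 256 * 40 ^ 8 / e).
  assert (HM : 0 < M) by (unfold M; apply Rdiv_lt_0_compat; [nra | lra]).
  set (T := 4 / e + 1 + 5 * Rabs (ln M)).
  assert (Hbig : 4 / e < T /\ 1 <= T /\ ln M < 0.2 * T).
  { pose proof (Rabs_pos (ln M)). pose proof (Rle_abs (ln M)).
    assert (0 < 4 / e) by (apply Rdiv_lt_0_compat; lra). unfold T; lra. }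
  exists (Z.to_nat (up (exp T))). intros n Hn.
  assert (HnT : exp T < INR n).
  { pose proof (archimed (exp T)) as [H1 _]. apply le_INR in Hn.
    rewrite INR_IZR_INZ, Z2Nat.id in Hn; [lra|]. apply le_IZR. pose proof (exp_pos T). lra. }
  assert (Hnpos : 0 < INR n) by (pose proof (exp_pos T); lra).
  assert (Hl : T < ln (INR n)) by (rewrite <- (ln_exp T); apply ln_increasing; auto; apply exp_pos).
  unfold Rdist, gap_eps. rewrite Rminus_0_r, Rabs_right by (apply Rle_ge, gap_eps_nonneg).
  set (l := ln (INR n)) in *.
  destruct Hbig as [HTe [HT1 HTM]].
  assert (Hterm1 : 2 / l ^ 2 < e / 2).
  { assert (0 < 4 / e) by (apply Rdiv_lt_0_compat; lra).
    assert (l <= l ^ 2) by nra.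
    apply Rlt_le_trans with (2 / (4 / e)); [|right; field; lra].
    apply Rmult_lt_compat_l; [lra|]. apply Rinv_lt_contravar; [apply Rmult_lt_0_compat|]; lra. }
  set (r := Rpower (INR n) 0.2).
  assert (Hr : M < r).
  { unfold r, Rpower. rewrite <- (exp_ln M) by auto. apply exp_increasing. fold l. lra. }
  assert (Hpw : Rpower (INR n) 0.4 = r * r)
    by (unfold r; rewrite <- Rpower_plus; f_equal; lra).
  assert (Hl8 : (l ^ 2) ^ 4 <= 40 ^ 8 * r).
  { rewrite <- pow_mult. simpl (2 * 4)%nat.
    replace 40 with (INR 8 / 0.2) by (simpl INR; lra).
    apply pow_ln_le_Rpower; [exact Hnpos | fold l; lra | lra | lia]. }
  assert (Hterm2 : 128 * (l ^ 2) ^ 4 / Rpower (INR n) 0.4 < e / 2).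
  { rewrite Hpw. apply Rle_lt_trans with (128 * 40 ^ 8 / r).
    - replace (128 * 40 ^ 8 / r) with (128 * (40 ^ 8 * r) / (r * r)) by (field; lra).
      apply Rmult_le_compat_r; [apply Rlt_le, Rinv_0_lt_compat; nra | lra].
    - apply Rlt_le_trans with (128 * 40 ^ 8 / M); [|unfold M; right; field; lra].
      apply Rmult_lt_compat_l; [nra | apply Rinv_lt_contravar; nra]. }
  lra.
Qed.

Lemma ln_INR_0 : ln (INR 0) = 0.
Proof.
  unfold ln. destruct (Rlt_dec 0 (INR 0)) as [h|h]; [exfalso; simpl in h; lra | reflexivity].
Qed.

Lemma ln_INR_nonneg n : 0 <= ln (INR n).
Proof.
  destruct n as [|n].
  - rewrite ln_INR_0; lra.
  - assert (1 <= INR (S n)) by (rewrite S_INR; pose proof (pos_INR n); lra).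
    destruct (Req_dec (INR (S n)) 1) as [E|E]; [rewrite E, ln_1; lra|].
    rewrite <- ln_1. left. apply ln_increasing; lra.
Qed.

Lemma ln_ge1_INR_pos n : 1 <= ln (INR n) -> 0 < INR n.
Proof.
  destruct n as [|n]; intros H; [|apply lt_0_INR; lia].
  rewrite ln_INR_0 in H; lra.
Qed.

Lemma in_js_ln_ge1 n j : In j (js n) -> 1 <= ln (INR n).
Proof.
  intros Hj. destruct (in_js n j Hj) as [Hj1 Hj2]. apply (le_INR 1) in Hj1.
  pose proof (ln_INR_nonneg n). simpl in Hj1. nra.
Qed.

Theorem lemma6 :
  exists eps : nat -> R, Un_cv eps 0 /\
    forall (D : nat) (p : nat -> R) (n : nat) (m : nat -> R) (S : list nat),
      is_distribution D p ->
      (forall j : nat, (1 <= j)%nat -> INR j < (ln (INR n))^2 ->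
         0 <= m j <= 1 /\ m j < 2 / INR n * (ln (INR n))^2) ->
      (forall a, In a S -> (a < D)%nat /\ 0 < p a) ->
      faithful D p n S ->
      Rabs (total_error D p S n m - total_dev D p n m) <= eps n.
Proof.
  exists gap_eps. split; [exact gap_eps_cv|].
  intros D p n m S Hdist Hm HS Hfaith.
  destruct (js n) as [|j js'] eqn:Ejs.
  - unfold total_error, total_dev. rewrite Ejs, !rsum_nil, Rminus_0_r, Rabs_R0.
    apply gap_eps_nonneg.
  - assert (Hl : 1 <= ln (INR n)) by (apply (in_js_ln_ge1 n j); rewrite Ejs; now left).
    pose proof (ln_ge1_INR_pos n Hl) as Hn.
    destruct (nbuckets_bounds n) as [HK1 HK2].
    eapply Rle_trans; [exact (total_gap_le D p n m S (nbuckets n) Hdist Hm HS Hfaith Hl Hn HK1)|].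
    exact (total_gap_le_gap_eps n (nbuckets n) Hl Hn HK2).
Qed.
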